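(* For all integers $k\ge\ell\ge0$, $F_{k,\ell}$ equals the $(\widetilde I_0,I_0)$ entry of the matrix $\widetilde{\mathbf T}^{\ell}\,\mathbf U\,\mathbf T^{k-\ell}$, where $I_0=[0,a-1]$ and $\widetilde I_0=[0,a-2]$ (the empty set if $a=1$). In particular $F_{k,0}=F_k$.
   Context: Let $S$ be a finite set of integers with $a:=\max S\ge 1$ and $b:=-\min S\ge 1$. Each $s\in S$ carries a weight $\omega_s$ in a field $K$ of characteristic $0$; set $\omega_s:=0$ for $s\in\mathbb Z\setminus S$, and for $s\in\mathbb Z$ put $\beta_s:=\delta_{s,0}-\omega_s$ and $\widetilde\beta_s:=-\beta_{s+1}$. For $k\ge0$, $A_k$ is the $(k+1)\times(k+1)$ matrix with rows and columns indexed by $0,\dots,k$ whose $(i,j)$ entry is $\omega_{j-i}$. Put $F_0:=1$ and $F_k:=\det(1-A_{k-1})$ for $k\ge1$. For $0\le\ell\le k$, $F_{k,\ell}$ is the $(\ell,0)$ cofactor of $1-A_k$, i.e. $(-1)^\ell$ times the determinant of the matrix obtained from $1-A_k$ by deleting row $\ell$ and column $0$. Notation: $[m,n]:=\{i\in\mathbb Z: m\le i\le n\}$, $X+c:=\{x+c:x\in X\}$; an $n$-subset is a subset of cardinality $n$. For a finite set $I\subseteq\mathbb Z$ and $s\in\mathbb Z$, $\epsilon_s(I):=(-1)^{\#\{i\in I:\ i<s\}}$. $\mathbf T$ is the square matrix with rows and columns indexed by the $a$-subsets of $[-b,a-1]$ and entries $\mathbf T[I,J]:=\epsilon_s(I)\beta_s$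 if there is an integer $s$ with $I\cup\{a\}=(J+1)\cup\{s\}$ (such $s$ is then unique), and $0$ otherwise. $\widetilde{\mathbf T}$ is the square matrix indexed by the $(a-1)$-subsets of $[-b-1,a-2]$ with $\widetilde{\mathbf T}[I,J]:=\epsilon_s(I)\widetilde\beta_s$ if there is an integer $s$ with $I\cup\{a-1\}=(J+1)\cup\{s\}$, and $0$ otherwise. $\mathbf U$ is the matrix with rows indexed by the $(a-1)$-subsets of $[-b-1,a-2]$ and columns by the $a$-subsets of $[-b,a-1]$, with $\mathbf U[I,J]=1$ if $I\cup\{a-1\}=J$ and $0$ otherwise. *)

From HB Require Import structures.
From mathcomp Require Import all_boot all_order all_algebra.
Set Implicit Arguments. Unset Strict Implicit. Unset Printing Implicit Defensive.
Import Order.TTheory GRing.Theory Num.Theory.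
Local Open Scope ring_scope.

Definition Amx (K : fieldType) (w : int -> K) (k : nat) : 'M[K]_(k.+1) :=
  \matrix_(i < k.+1, j < k.+1) w (j%:Z - i%:Z).

Definition Fk (K : fieldType) (w : int -> K) (k : nat) : K :=
  match k with 0%N => 1 | k'.+1 => \det (1%:M - Amx w k') end.

(* F_{k,l} = (l,0) cofactor of 1 - A_k (mathcomp's cofactor includes the
   sign (-1)^(l+0)). Meaningful for l <= k. *)
Definition Fkl (K : fieldType) (w : int -> K) (k l : nat) : K :=
  cofactor (1%:M - Amx w k) (inord l) ord0.

Definition beta (K : fieldType) (w : int -> K) (s : int) : K :=
  (s == 0)%:R - w s.
Definition betat (K : fieldType) (w : int -> K) (s : int) : K :=
  - beta w (s + 1).

(* ---------- Subset side ----------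
   All integer sets involved live in the window U = [-b-2, a+1].
   An integer x in U is encoded by the ordinal k : 'I_(a+b+4) with
   x = k - (b+2). A finite set of integers contained in U is encoded as a
   {set 'I_(a+b+4)}. *)
Definition Usz (a b : nat) : nat := (a + b + 3).+1.
Definition dec (a b : nat) (k : 'I_(Usz a b)) : int := (k : nat)%:Z - (b + 2)%:Z.

Definition enc_a (a b : nat) : 'I_(Usz a b) := inord (a + b + 2).
Definition enc_a1 (a b : nat) : 'I_(Usz a b) := inord (a + b + 1).

Definition shift1 (a b : nat) (J : {set 'I_(Usz a b)}) : {set 'I_(Usz a b)} :=
  [set k : 'I_(Usz a b) | [exists j in J, (k : nat) == (j : nat).+1]].

Definition eps (K : fieldType) (a b : nat) (I : {set 'I_(Usz a b)})
  (k : 'I_(Usz a b)) : K := (-1) ^+ #|[set i in I | (i < k)%N]|.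

Definition within (a b : nat) (lo hi : int) (I : {set 'I_(Usz a b)}) : bool :=
  [forall k in I, (lo <= dec k) && (dec k <= hi)].

Definition Tidx (a b : nat) (I : {set 'I_(Usz a b)}) : bool :=
  (#|I| == a) && within (- b%:Z) (a%:Z - 1) I.
Definition Ttidx (a b : nat) (I : {set 'I_(Usz a b)}) : bool :=
  (#|I| == a.-1) && within (- b%:Z - 1) (a%:Z - 2) I.

Definition smx (K : fieldType) (a b : nat) :=
  {set 'I_(Usz a b)} -> {set 'I_(Usz a b)} -> K.

(* T[I,J] = eps_s(I) beta_s if I u {a} = (J+1) u {s}, else 0.
   (Any such s lies in I u {a}, hence in the window.) *)
Definition Tmx (K : fieldType) (a b : nat) (w : int -> K) : smx K a b :=
  fun I J =>
    if [pick k : 'I_(Usz a b) | (I :|: [set enc_a a b]) == (shift1 J :|: [set k])]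
      is Some k then eps K I k * beta w (dec k) else 0.

Definition Ttmx (K : fieldType) (a b : nat) (w : int -> K) : smx K a b :=
  fun I J =>
    if [pick k : 'I_(Usz a b) | (I :|: [set enc_a1 a b]) == (shift1 J :|: [set k])]
      is Some k then eps K I k * betat w (dec k) else 0.

Definition Umx (K : fieldType) (a b : nat) : smx K a b :=
  fun I J => ((I :|: [set enc_a1 a b]) == J)%:R.

Definition smul (K : fieldType) (a b : nat) (P : pred {set 'I_(Usz a b)})
  (X Y : smx K a b) : smx K a b :=
  fun I J => \sum_(L : {set 'I_(Usz a b)} | P L) X I L * Y L J.

Definition sid (K : fieldType) (a b : nat) : smx K a b := fun I J => (I == J)%:R.

Definition spow (K : fieldType) (a b : nat) (P : pred {set 'I_(Usz a b)})
  (X : smx K a b) (n : nat) : smx K a b :=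
  iter n (fun Y => smul P Y X) (@sid K a b).

Definition I0 (a b : nat) : {set 'I_(Usz a b)} :=
  [set k | (0 <= dec k) && (dec k <= a%:Z - 1)].
Definition It0 (a b : nat) : {set 'I_(Usz a b)} :=
  [set k | (0 <= dec k) && (dec k <= a%:Z - 2)].

From HB Require Import structures.
From mathcomp Require Import all_boot all_order all_algebra zify ring.
Set Implicit Arguments. Unset Strict Implicit. Unset Printing Implicit Defensive.
Import Order.TTheory GRing.Theory Num.Theory.
Local Open Scope ring_scope.

(* Both sides of the theorem are generalized Toeplitz minors
   tminor h m s = det (h_i (s_j - i))_{i,j<m} with increasing column positions s.
   - F_{k,l} is (-1)^l times such a minor on the columns [0, k), with row data
     beta(. + 1) on the first l rows and beta below (Fkl_minor).
   - For an index set I, let cols I = (I u [A, oo)) n [-B, m). Expanding the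
     minor on cols I along its first row (transfer_step), the column dec k that
     is deleted corresponds to removing k from I u {e}, the remaining columns
     shifted down by one are cols J with I u {e} = (J+1) u {k}, and the sign is
     eps_k(I): this is exactly row I of a transfer matrix Xmx, of which T and
     Ttilde are instances.
   - Iterating, T^m[I, I_0] is the minor of beta on cols I (Tpow_minor), and
     adding U and l factors of Ttilde yields (-1)^l times the minor with l
     shifted rows on cols I for the window of Ttilde (mixed_minor).
   At I = Itilde_0 these columns are [0, k), which gives F_{k,l}; the identity
   F_{k,0} = F_k is the deletion of row and column 0 of 1 - A_k (Fkl0).
   The file develops integer windows and the minors, the encoding of integer
   sets by sets of ordinals, the generic transfer step, the algebra of the
   set-indexed matrices, and finally the two iterations and the theorem. *)

Definition zrange (lo : int) (N : nat) : seq int := [seq lo + i%:Z | i <- iota 0 N].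

Lemma mem_zrange lo N x : (x \in zrange lo N) = (lo <= x) && (x < lo + N%:Z).
Proof.
apply/mapP/idP.
  by case=> i; rewrite mem_iota add0n => /andP[_ hi] ->; lia.
move=> /andP[h1 h2]; exists `|x - lo|%N; last lia.
by rewrite mem_iota add0n; lia.
Qed.

Lemma zrange_uniq lo N : uniq (zrange lo N).
Proof. by rewrite map_inj_uniq ?iota_uniq // => i j /= h; lia. Qed.

Lemma zrange_sorted lo N : sorted <%R (zrange lo N).
Proof. by apply: homo_sorted (iota_ltn_sorted 0 N) => i j /= h; lia. Qed.

Lemma size_zrange lo N : size (zrange lo N) = N.
Proof. by rewrite size_map size_iota. Qed.

Lemma zrangeS lo N : zrange lo N.+1 = lo :: zrange (lo + 1) N.
Proof.
rewrite /zrange /= addr0; congr (_ :: _).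
by rewrite -(addn0 1%N) iotaDl -map_comp; apply: eq_map => i /=; lia.
Qed.

Lemma map_zrange_shift lo N c :
  [seq x + c | x <- zrange lo N] = zrange (lo + c) N.
Proof. by rewrite /zrange -map_comp; apply: eq_map => i /=; lia. Qed.

Lemma map_filter_shift (p : pred int) (s : seq int) c :
  [seq x + c | x <- filter p s] = [seq y <- [seq x + c | x <- s] | p (y - c)].
Proof. by elim: s => //= x s IH; rewrite addrK; case: (p x) => //=; rewrite IH. Qed.

(* In an increasing sequence, the j-th entry is preceded by exactly j entries;
   this computes the sign of a Laplace expansion term from the entry's value. *)
Lemma count_lt_nth (s : seq int) j : sorted <%R s -> (j < size s)%N ->
  count (fun x => x < nth 0 s j) s = j.
Proof.
elim: s j => [|x s IH] j //=; rewrite (path_sortedE (@lt_trans _ _)).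
move=> /andP[/allP hall hs]; case: j => [|j] hj /=.
  rewrite ltxx add0n; apply/eqP; rewrite -leqn0 leqNgt -has_count.
  by apply/hasPn => y /hall; rewrite -leNgt => /ltW.
by rewrite IH // hall // mem_nth.
Qed.

Lemma size_filter_neq (s : seq int) c : uniq s ->
  ((size s).-1 <= size [seq x <- s | x != c])%N.
Proof.
move=> hu; rewrite size_filter.
have := count_predC (pred1 c) s; rewrite count_uniq_mem //.
have -> : count (predC (pred1 c)) s = count (fun x => x != c) s by apply: eq_count.
by case: (c \in s) => /=; lia.
Qed.

Definition rem_at (j : nat) (s : seq int) := take j s ++ drop j.+1 s.

Lemma size_rem_at j s : (j < size s)%N -> size (rem_at j s) = (size s).-1.
Proof. by move=> h; rewrite size_cat size_take size_drop h; lia. Qed.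

Lemma nth_rem_at j s j' : (j < size s)%N ->
  nth 0 (rem_at j s) j' = nth 0 s (if (j' < j)%N then j' else j'.+1).
Proof.
move=> h; rewrite nth_cat size_take h; case: ltnP => hj; first by rewrite nth_take.
by rewrite nth_drop; congr nth; lia.
Qed.

Lemma rem_at_filter (s : seq int) j : uniq s -> (j < size s)%N ->
  rem_at j s = [seq y <- s | y != nth 0 s j].
Proof.
move=> hu hj; set x := nth 0 s j.
have e : s = take j s ++ x :: drop j.+1 s by rewrite -drop_nth // cat_take_drop.
move: hu; rewrite {1}e cat_uniq /= => /and3P[_ hn /andP[hx _]].
have hx1 : x \notin take j s by apply: contra hn => h; rewrite /= h.
rewrite [in RHS]e filter_cat /= eqxx /rem_at; congr (_ ++ _); apply/esym/all_filterP/allP.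
  by move=> y hy; apply: contraNneq hx1 => <-.
by move=> y hy; apply: contraNneq hx => <-.
Qed.

Definition tminor (K : fieldType) (h : nat -> int -> K) (m : nat) (s : seq int) : K :=
  if size s == m then \det (\matrix_(i < m, j < m) h i (nth 0 s j - i%:Z)) else 0.

Lemma eq_tminor (K : fieldType) (h1 h2 : nat -> int -> K) m s :
  (forall i x, h1 i x = h2 i x) -> tminor h1 m s = tminor h2 m s.
Proof.
move=> e; rewrite /tminor; case: eqP => // _; congr (\det _).
by apply/matrixP => i j; rewrite !mxE e.
Qed.

Lemma tminor_zero_col (K : fieldType) (h : nat -> int -> K) m s c :
  c \in s -> (forall i, h i (c - i%:Z) = 0) -> tminor h m s = 0.
Proof.
move=> cs hz; rewrite /tminor; case: eqP => // hs.
have hi : (index c s < m)%N by rewrite -hs index_mem.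
rewrite (expand_det_col _ (Ordinal hi)) big1 // => i _.
by rewrite mxE /= nth_index // hz mul0r.
Qed.

Lemma tminor_expand (K : fieldType) (h : nat -> int -> K) m s : size s = m.+1 ->
  tminor h m.+1 s = \sum_(j < m.+1) (-1) ^+ j * h 0%N (nth 0 s j) *
      tminor (fun i => h i.+1) m [seq x - 1 | x <- rem_at j s].
Proof.
move=> hs; rewrite /tminor hs eqxx (expand_det_row _ ord0); apply: eq_bigr => j _.
rewrite size_map size_rem_at hs ?ltn_ord // eqxx /cofactor mxE add0n subr0.
rewrite mulrA [h _ _ * _]mulrC; congr (_ * _); congr (\det _).
apply/matrixP => i k; rewrite !mxE (nth_map 0); last by rewrite size_rem_at hs.
rewrite nth_rem_at ?hs ?ltn_ord //.
have -> : (lift j k : nat) = (if (k < j)%N then (k : nat) else k.+1).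
  by rewrite /= /bump; case: ltnP => hk; lia.
have -> : (lift ord0 i : nat) = i.+1 by [].
congr (h _ _); set t := nth _ _ _; rewrite -addn1 PoszD; ring.
Qed.

Lemma tminor_expand_sorted (K : fieldType) (h : nat -> int -> K) m s :
  sorted <%R s -> size s = m.+1 ->
  tminor h m.+1 s = \sum_(c <- s) (-1) ^+ count (fun x => x < c) s * h 0%N c *
      tminor (fun i => h i.+1) m [seq x - 1 | x <- s & x != c].
Proof.
move=> hsort hs; have hu : uniq s by apply: sorted_uniq hsort; [exact: lt_trans | exact: ltxx].
rewrite tminor_expand // [RHS](big_nth 0) hs big_mkord; apply: eq_bigr => j _.
by rewrite count_lt_nth ?hs // rem_at_filter ?hs.
Qed.

Section Encoding.
Variables a b : nat.
Local Notation pos := 'I_(Usz a b).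
Local Notation iset := {set 'I_(Usz a b)}.

Definition zmem (S : iset) (x : int) : bool := [exists k in S, dec k == x].

Lemma zmemP (S : iset) x : reflect (exists2 k, k \in S & dec k = x) (zmem S x).
Proof.
apply: (iffP existsP); first by case=> k /andP[h1 /eqP h2]; exists k.
by case=> k h1 h2; exists k; rewrite h1 h2 eqxx.
Qed.

Lemma inj_dec : injective (@dec a b).
Proof. by move=> i j; rewrite /dec => h; apply: val_inj => /=; lia. Qed.

Lemma dec_ltE (i k : pos) : (dec i < dec k) = (i < k)%N.
Proof. by rewrite /dec; lia. Qed.

Lemma dec_surj (x : int) : - (b + 2)%:Z <= x -> x <= a%:Z + 1 -> exists k : pos, dec k = x.
Proof.
move=> h1 h2; have hlt : (absz (x + (b + 2)%:Z)%R < Usz a b)%N by rewrite /Usz; lia.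
by exists (Ordinal hlt); rewrite /dec /=; lia.
Qed.

Lemma zmemU1 (S : iset) k x : zmem (S :|: [set k]) x = zmem S x || (x == dec k).
Proof.
apply/zmemP/orP.
  case=> j; rewrite !inE => /orP[hj|/eqP->] <-; last by right.
  by left; apply/zmemP; exists j.
case=> [/zmemP[j hj <-]|/eqP->]; first by exists j; rewrite // !inE hj.
by exists k; rewrite // !inE eqxx orbT.
Qed.

Lemma zmemD1 (S : iset) k x : zmem (S :\ k) x = zmem S x && (x != dec k).
Proof.
apply/zmemP/andP.
  case=> j; rewrite !inE => /andP[hjk hj] <-; split; first by apply/zmemP; exists j.
  by apply: contra hjk => /eqP /inj_dec ->.
case=> /zmemP[j hj <-] hne; exists j => //; rewrite !inE hj andbT.
by apply: contra hne => /eqP ->.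
Qed.

Lemma zmem_below (S : iset) (k : pos) x :
  zmem [set i in S | (i < k)%N] x = zmem S x && (x < dec k).
Proof.
apply/zmemP/andP.
  case=> i; rewrite inE => /andP[hi hik] <-; split; first by apply/zmemP; exists i.
  by rewrite dec_ltE.
by case=> /zmemP[i hi <-] hlt; exists i => //; rewrite inE hi -dec_ltE.
Qed.

Lemma withinP lo hi (J : iset) :
  reflect (forall y, zmem J y -> lo <= y <= hi) (within lo hi J).
Proof.
apply: (iffP forall_inP); first by move=> h y /zmemP[k hk <-]; apply: h.
by move=> h k hk; apply: h; apply/zmemP; exists k.
Qed.

Lemma card_zmem (S : iset) (L : seq int) :
  uniq L -> (forall x, (x \in L) = zmem S x) -> #|S| = size L.
Proof.
move=> uL hL; have hp : perm_eq (map (@dec a b) (enum S)) L.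
  apply: uniq_perm => //; first by rewrite map_inj_uniq ?enum_uniq //; exact: inj_dec.
  move=> x; rewrite hL; apply/mapP/zmemP.
    by case=> k; rewrite mem_enum => hk ->; exists k.
  by case=> k hk <-; exists k; rewrite ?mem_enum.
by rewrite -(perm_size hp) size_map cardE.
Qed.

Definition unshift (S : iset) : iset :=
  [set j : pos | [exists x in S, (x : nat) == j.+1]].

Lemma zmem_unshift (S : iset) y :
  (forall x, x \in S -> (0 < x)%N) -> zmem (unshift S) y = zmem S (y + 1).
Proof.
move=> hpos; apply/zmemP/zmemP.
  case=> j; rewrite inE => /existsP[x /andP[hx /eqP hxj]] <-; exists x => //.
  by rewrite /dec hxj; lia.
case=> x hx hdec; have := hpos x hx => hx0.
have hlt : (x.-1 < Usz a b)%N by apply: leq_ltn_trans (leq_pred _) (ltn_ord x).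
exists (Ordinal hlt); last by move: hdec; rewrite /dec /=; lia.
by rewrite inE; apply/existsP; exists x; rewrite hx /=; lia.
Qed.

Lemma shift1_unshift (S : iset) :
  (forall x, x \in S -> (0 < x)%N) -> shift1 (unshift S) = S.
Proof.
move=> hpos; apply/setP => k; rewrite inE; apply/existsP/idP.
  case=> j /andP[]; rewrite inE => /existsP[x /andP[hx /eqP hxj]] /eqP hkj.
  by have -> : k = x by apply: val_inj; rewrite /= hkj hxj.
move=> hk; have hlt : (k.-1 < Usz a b)%N.
  by apply: leq_ltn_trans (leq_pred _) (ltn_ord k).
exists (Ordinal hlt); rewrite inE /=; have := hpos k hk => hk0.
apply/andP; split; last by apply/eqP; lia.
by apply/existsP; exists k; rewrite hk /=; apply/eqP; lia.
Qed.

Lemma unshift_shift1 (J : iset) :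
  (forall j, j \in J -> (j.+1 < Usz a b)%N) -> unshift (shift1 J) = J.
Proof.
move=> hlt; apply/setP => j; rewrite inE; apply/existsP/idP.
  case=> x /andP[]; rewrite inE => /existsP[j' /andP[hj' /eqP h1]] /eqP h2.
  by have -> : j = j' by apply: val_inj; move: h1 h2 => /= -> [].
move=> hj; exists (Ordinal (hlt j hj)); rewrite inE /= eqxx andbT.
by apply/existsP; exists j; rewrite hj /=.
Qed.

Lemma card_shift1 (J : iset) :
  (forall j, j \in J -> (j.+1 < Usz a b)%N) -> #|shift1 J| = #|J|.
Proof.
move=> hlt; have -> : shift1 J = (fun j : pos => (inord j.+1 : pos)) @: J.
  apply/setP => k; rewrite inE; apply/existsP/imsetP.
    case=> j /andP[hj /eqP hk]; exists j => //; apply: val_inj.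
    by rewrite /= inordK ?hk ?hlt.
  by case=> j hj ->; exists j; rewrite hj /= inordK ?hlt.
rewrite card_in_imset // => i j hi hj /(congr1 val) /=.
by rewrite !inordK ?hlt // => -[h]; exact: val_inj.
Qed.

Lemma zmem_I0 x : zmem (I0 a b) x = (0 <= x) && (x <= a%:Z - 1).
Proof.
apply/zmemP/idP; first by case=> k; rewrite inE => hk <-.
move=> hx; have [k hk] : exists k : pos, dec k = x by apply: dec_surj; lia.
by exists k; rewrite // inE hk.
Qed.

Lemma zmem_It0 x : zmem (It0 a b) x = (0 <= x) && (x <= a%:Z - 2).
Proof.
apply/zmemP/idP; first by case=> k; rewrite inE => hk <-.
move=> hx; have [k hk] : exists k : pos, dec k = x by apply: dec_surj; lia.
by exists k; rewrite // inE hk.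
Qed.

End Encoding.

Section Transfer.
Variables a b : nat.
Local Notation pos := 'I_(Usz a b).
Local Notation iset := {set 'I_(Usz a b)}.

(* J is an A-subset of [-B, A-1]: the index sets of T (A = a, B = b) and of
   Ttilde (A = a-1, B = b+1). *)
Definition wsub (A B : nat) (J : iset) : bool :=
  (#|J| == A) && within (- B%:Z) (A%:Z - 1) J.

Lemma wsub_zmem A B (J : iset) y : wsub A B J -> zmem J y -> - B%:Z <= y <= A%:Z - 1.
Proof. by case/andP=> _ /withinP; apply. Qed.

(* The transfer matrix with new element e and weights g:
   X[I,J] = eps_k(I) g_k when I u {e} = (J+1) u {k}. Both T and Ttilde are
   instances of it. *)
Definition Xmx (K : fieldType) (e : pos) (g : int -> K) : smx K a b :=
  fun I J =>
    if [pick k : pos | (I :|: [set e]) == (shift1 J :|: [set k])]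
      is Some k then eps K I k * g (dec k) else 0.

Definition tnext (I : iset) (e k : pos) : iset := unshift ((I :|: [set e]) :\ k).

Definition in_cols (I : iset) (A : nat) (x : int) : bool := (A%:Z <= x) || zmem I x.

Definition cols (I : iset) (A B m : nat) : seq int :=
  [seq x <- zrange (- B%:Z) (m + B) | in_cols I A x].

Lemma cols_uniq (I : iset) A B m : uniq (cols I A B m).
Proof. by rewrite filter_uniq ?zrange_uniq. Qed.

Lemma cols_sorted (I : iset) A B m : sorted <%R (cols I A B m).
Proof. by apply: sorted_filter (zrange_sorted _ _); exact: lt_trans. Qed.

Lemma mem_cols (I : iset) A B m x :
  (x \in cols I A B m) = [&& in_cols I A x, - B%:Z <= x & x < m%:Z].
Proof. by rewrite mem_filter mem_zrange; case: (in_cols I A x) => /=; lia. Qed.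

(* An A-subset of [-B, A-1] leaves at most B gaps, so cols has >= m entries. *)
Lemma size_cols_ge A B (I : iset) m : wsub A B I -> (m <= size (cols I A B m))%N.
Proof.
move=> hI; set R := zrange (- B%:Z) (m + B).
have hcI : #|I| = size [seq x <- zrange (- B%:Z) (A + B) | zmem I x].
  apply: card_zmem; first by rewrite filter_uniq ?zrange_uniq.
  move=> x; rewrite mem_filter mem_zrange; case hd: (zmem I x) => //=.
  by have := wsub_zmem hI hd; lia.
have hgaps : size [seq x <- zrange (- B%:Z) (A + B) | ~~ zmem I x] = B.
  have := size_zrange (- B%:Z) (A + B).
  rewrite -(count_predC (zmem I)) -!size_filter.
  by case/andP: (hI) => /eqP; rewrite hcI => -> _ /addnI.
have hsub : (size [seq x <- R | ~~ in_cols I A x] <= B)%N.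
  rewrite -hgaps; apply: uniq_leq_size; first by rewrite filter_uniq ?zrange_uniq.
  move=> x; rewrite !mem_filter !mem_zrange /in_cols negb_or.
  by move=> /andP[/andP[h1 h2] h3]; rewrite h2 /=; lia.
have := count_predC (fun x => in_cols I A x) R; rewrite size_zrange.
have -> : count (predC (fun x => in_cols I A x)) R = count (fun x => ~~ in_cols I A x) R.
  exact: eq_count.
by move: hsub; rewrite /cols -/R !size_filter; lia.
Qed.

(* The transfer step for a fixed row I, a new element e encoding A, and a
   window [-B, A-1] with B <= b+1, so that all sets involved are encoded. *)
Section Step.
Variables (A B : nat) (e : pos).
Hypotheses (hAa : (A <= a)%N) (hBb : (B <= b.+1)%N) (hB : (1 <= B)%N).
Hypothesis he : dec e = A%:Z.
Variable I : iset.
Hypothesis hI : wsub A B I.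

(* Elements of I u {e} lie in [-B, A]; in particular they are not the lowest
   ordinal, so unshift applies, and I u {e} has A+1 elements. *)
Lemma zmem_Ue y : zmem (I :|: [set e]) y -> - B%:Z <= y <= A%:Z.
Proof. by rewrite zmemU1 he => /orP[/(wsub_zmem hI)|/eqP->]; lia. Qed.

Lemma dec_Ue k : k \in I :|: [set e] -> - B%:Z <= dec k <= A%:Z.
Proof. by move=> hk; apply: zmem_Ue; apply/zmemP; exists k. Qed.

Lemma pos_Ue x : x \in I :|: [set e] -> (0 < x)%N.
Proof. by move/dec_Ue; rewrite /dec; lia. Qed.

Lemma succ_wsub (J : iset) j : wsub A B J -> j \in J -> (j.+1 < Usz a b)%N.
Proof.
move=> hJ hj; have : zmem J (dec j) by apply/zmemP; exists j.
by move/(wsub_zmem hJ); rewrite /dec /Usz; lia.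
Qed.

Lemma card_Ue : #|I :|: [set e]| = A.+1.
Proof.
have he_notin : e \notin I.
  apply/negP => hx; have : zmem I (dec e) by apply/zmemP; exists e.
  by move/(wsub_zmem hI); rewrite he; lia.
by rewrite setUC cardsU1 he_notin; case/andP: hI => /eqP ->.
Qed.

Lemma shift1_tnext k : shift1 (tnext I e k) = (I :|: [set e]) :\ k.
Proof. by apply: shift1_unshift => x; rewrite inE => /andP[_]; exact: pos_Ue. Qed.

(* Cardinality forces the removed element k to be new. *)
Lemma notin_shift1 (J : iset) k :
  wsub A B J -> I :|: [set e] = shift1 J :|: [set k] -> k \notin shift1 J.
Proof.
move=> hJ hIJ; apply/negP => hk; have := card_Ue; rewrite hIJ.
rewrite (setUidPl _); last by rewrite sub1set.
rewrite card_shift1; last by move=> j; exact: succ_wsub hJ.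
by case/andP: hJ => /eqP ->; lia.
Qed.

Lemma tnext_eq (J : iset) k : wsub A B J -> k \in I :|: [set e] ->
  (J == tnext I e k) = (I :|: [set e] == shift1 J :|: [set k]).
Proof.
move=> hJ hk; apply/eqP/eqP; first by move=> ->; rewrite shift1_tnext [RHS]setUC setD1K.
move=> hIJ; rewrite /tnext hIJ setUC setU1K ?notin_shift1 //.
by rewrite unshift_shift1 // => j; exact: succ_wsub hJ.
Qed.

Lemma wsub_tnext k : k \in I :|: [set e] ->
  wsub A B (tnext I e k) = ~~ zmem ((I :|: [set e]) :\ k) (- B%:Z).
Proof.
move=> hk; have hpos : forall x, x \in (I :|: [set e]) :\ k -> (0 < x)%N.
  by move=> x; rewrite inE => /andP[_]; exact: pos_Ue.
have hc : #|tnext I e k| = A.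
  rewrite -card_shift1; last first.
    by move=> j; rewrite inE => /existsP[x /andP[_ /eqP <-]]; exact: ltn_ord.
  have := cardsD1 k (I :|: [set e]).
  by rewrite shift1_tnext hk card_Ue add1n => -[].
rewrite /wsub hc eqxx /=; apply/withinP/idP.
  move=> hw; apply/negP => hd.
  by have := hw (- B%:Z - 1); rewrite /tnext zmem_unshift // subrK => /(_ hd); lia.
move=> hn y; rewrite /tnext zmem_unshift // => hd.
have := hd; rewrite zmemD1 => /andP[/zmem_Ue hr _].
have : y + 1 != - B%:Z by apply: contraNneq hn => <-.
lia.
Qed.

Lemma Xmx_sum (K : fieldType) (g : int -> K) (F : iset -> K) :
  \sum_(J | wsub A B J) Xmx e g I J * F J =
  \sum_(k in I :|: [set e]) eps K I k * g (dec k) *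
     (if wsub A B (tnext I e k) then F (tnext I e k) else 0).
Proof.
have hX : forall J, wsub A B J -> Xmx e g I J =
    \sum_(k in I :|: [set e]) (J == tnext I e k)%:R * (eps K I k * g (dec k)).
  move=> J hJ; rewrite /Xmx; case: pickP => [k0 hk0 | hnone]; last first.
    by rewrite big1 // => k hk; rewrite tnext_eq // hnone mul0r.
  have hk0in : k0 \in I :|: [set e] by rewrite (eqP hk0) !inE eqxx orbT.
  rewrite (bigD1 k0) //= tnext_eq // hk0 mul1r big1 ?addr0 //.
  move=> k /andP[hk hne]; rewrite tnext_eq //; case: eqP => [hIJ|]; last by rewrite mul0r.
  have : k \in shift1 J :|: [set k0] by rewrite -(eqP hk0) hIJ !inE eqxx orbT.
  by rewrite in_setU in_set1 (negbTE (notin_shift1 hJ hIJ)) (negbTE hne).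
under eq_bigr => J hJ do rewrite hX // big_distrl.
rewrite exchange_big /=; apply: eq_bigr => k hk.
case hs: (wsub A B (tnext I e k)).
  rewrite (bigD1 (tnext I e k)) //= eqxx mul1r big1 ?addr0 // => J /andP[_ hne].
  by rewrite (negbTE hne) !mul0r.
rewrite mulr0 big1 // => J hJ; case: eqP => [hJk|]; last by rewrite !mul0r.
by move: hJ; rewrite hJk hs.
Qed.

Lemma cols_tnext k m : k \in I :|: [set e] -> wsub A B (tnext I e k) ->
  cols (tnext I e k) A B m = [seq x - 1 | x <- cols I A B m.+1 & x != dec k].
Proof.
move=> hk hJ; have hc := dec_Ue hk.
rewrite /cols -filter_predI map_filter_shift map_zrange_shift addSn zrangeS /= addrK.
have -> : (- B%:Z != dec k) && in_cols I A (- B%:Z) = false.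
  move: hJ; rewrite wsub_tnext // zmemD1 zmemU1 /= /in_cols he.
  by case: (zmem I (- B%:Z)); lia.
apply: eq_filter => y /=; rewrite opprK /in_cols /tnext zmem_unshift; last first.
  by move=> x; rewrite inE => /andP[_]; exact: pos_Ue.
by rewrite zmemD1 zmemU1 he; case: (zmem I (y + 1)); lia.
Qed.

Lemma eps_cols (K : fieldType) k m : k \in I :|: [set e] -> dec k <= m%:Z ->
  eps K I k = (-1) ^+ count (fun x => x < dec k) (cols I A B m.+1).
Proof.
move=> hk hkm; have hc := dec_Ue hk.
rewrite /eps; congr (_ ^+ _); rewrite -size_filter; apply: card_zmem.
  by rewrite filter_uniq ?cols_uniq.
move=> x; rewrite mem_filter mem_cols zmem_below /in_cols.
case hd: (zmem I x) => /=; last by lia.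
by have := wsub_zmem hI hd; lia.
Qed.

Lemma cols_low_perm m :
  perm_eq [seq c <- cols I A B m.+1 | c <= A%:Z]
          [seq c <- map (@dec a b) (enum (I :|: [set e])) | c <= m%:Z].
Proof.
apply: uniq_perm; first by rewrite filter_uniq // cols_uniq.
  by apply: filter_uniq; rewrite map_inj_uniq ?enum_uniq //; exact: inj_dec.
move=> c; rewrite !mem_filter mem_zrange /in_cols.
have -> : (c \in map (@dec a b) (enum (I :|: [set e]))) = zmem (I :|: [set e]) c.
  apply/mapP/zmemP; first by case=> k; rewrite mem_enum => hk ->; exists k.
  by case=> k hk <-; exists k; rewrite ?mem_enum.
rewrite zmemU1 he; case hd: (zmem I c) => /=; last by lia.
by have := wsub_zmem hI hd; lia.
Qed.

Lemma tnext_minor (K : fieldType) (h : nat -> int -> K) (F : iset -> K) m k :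
  (forall i, h i (- B%:Z - 1 - i%:Z) = 0) ->
  (forall J, wsub A B J -> F J = tminor h m (cols J A B m)) ->
  k \in I :|: [set e] ->
  (if wsub A B (tnext I e k) then F (tnext I e k) else 0) =
  tminor h m [seq x - 1 | x <- cols I A B m.+1 & x != dec k].
Proof.
move=> hz hF hk; case hs: (wsub A B (tnext I e k)); first by rewrite hF // cols_tnext.
apply/esym/(@tminor_zero_col _ _ _ _ (- B%:Z - 1)) => //; apply/mapP; exists (- B%:Z) => //.
move: hs; rewrite wsub_tnext // => /negbFE; rewrite zmemD1 zmemU1 he.
rewrite mem_filter mem_cols /in_cols => /andP[/orP[hd|]] hne; last by lia.
by rewrite hne hd orbT /=; lia.
Qed.

(* The transfer step: expanding the minor with columns cols I along its first
   row gives row I of the transfer matrix applied to the minors of one size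
   less. Here lam * g is the first row of data and h' the remaining rows,
   which vanish on the column -B-1 just below the window. *)
Lemma transfer_step (K : fieldType) (g : int -> K) (h h' : nat -> int -> K) (lam : K)
    (F : iset -> K) m :
  (forall s, A%:Z < s -> g s = 0) ->
  (forall s, h 0%N s = lam * g s) ->
  (forall i s, h i.+1 s = h' i s) ->
  (forall i, h' i (- B%:Z - 1 - i%:Z) = 0) ->
  (forall J, wsub A B J -> F J = tminor h' m (cols J A B m)) ->
  tminor h m.+1 (cols I A B m.+1) = lam * \sum_(J | wsub A B J) Xmx e g I J * F J.
Proof.
move=> hg h0 hS hz hF; rewrite Xmx_sum; set C := cols I A B m.+1.
pose GG c := tminor h' m [seq x - 1 | x <- C & x != c].
pose term c := (-1) ^+ count (fun x => x < c) C * h 0%N c * GG c.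
under eq_bigr => k hk do rewrite (tnext_minor hz hF hk) -/(GG _).
have hCge : (m.+1 <= size C)%N by apply: size_cols_ge.
have [hsz|hsz] := eqVneq (size C) m.+1; last first.
  rewrite {1}/tminor (negbTE hsz) big1 ?mulr0 // => k hk.
  rewrite /GG /tminor size_map; have := size_filter_neq (dec k) (cols_uniq I A B m.+1).
  rewrite -/C.
  by case: eqP => [-> | _]; [rewrite -subn1; lia | rewrite mulr0].
rewrite tminor_expand_sorted ?cols_sorted // (eq_bigr term); last first.
  by move=> c _; congr (_ * _); exact: eq_tminor.
rewrite (bigID (fun c => c <= A%:Z)) /= [X in _ + X]big1 ?addr0; last first.
  by move=> c; rewrite -ltNge => hc; rewrite /term h0 hg // !mulr0 mul0r.
rewrite (bigID (fun k => dec k <= m%:Z)) /= [X in _ + X]big1 ?addr0; last first.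
  move=> k /andP[hk]; rewrite -ltNge => hkm; rewrite /GG /tminor size_map.
  have -> : [seq x <- C | x != dec k] = C.
    by apply/all_filterP/allP => x; rewrite mem_cols => /and3P[_ _ hx]; lia.
  by rewrite hsz eqn_leq ltnn mulr0.
rewrite mulr_sumr [RHS](eq_bigr (fun k => term (dec k))); last first.
  by move=> k /andP[hk hkm]; rewrite /term (eps_cols K hk hkm) h0; ring.
rewrite -big_enum_cond -(big_map (@dec a b) (fun c => c <= m%:Z) term).
by rewrite -big_filter -[in RHS]big_filter; apply/perm_big/cols_low_perm.
Qed.

End Step.
End Transfer.

Section SetMatrixAlgebra.
Variables (K : fieldType) (a b : nat).
Local Notation iset := {set 'I_(Usz a b)}.
Variable P : pred iset.
Implicit Types (X Y W : smx K a b).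

Lemma smul1mx X I J : P I -> smul P (@sid K a b) X I J = X I J.
Proof.
move=> hI; rewrite /smul (bigD1 I) //= /sid eqxx mul1r big1 ?addr0 //.
by move=> L /andP[_ hL]; rewrite eq_sym (negbTE hL) mul0r.
Qed.

Lemma smulmx1 X I J : P J -> smul P X (@sid K a b) I J = X I J.
Proof.
move=> hJ; rewrite /smul (bigD1 J) //= /sid eqxx mulr1 big1 ?addr0 //.
by move=> L /andP[_ hL]; rewrite (negbTE hL) mulr0.
Qed.

(* X^(m+1) = X X^m on the entries indexed by P (spow multiplies on the right). *)
Lemma spowSl X m I J : P I -> P J -> spow P X m.+1 I J = smul P X (spow P X m) I J.
Proof.
elim: m I J => [|m IH] I J hI hJ; first by rewrite /= smul1mx // smulmx1.
change (smul P (spow P X m.+1) X I J = smul P X (spow P X m.+1) I J).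
rewrite [LHS]/smul.
under eq_bigr => L hL do rewrite IH // /smul big_distrl.
rewrite exchange_big /smul /=; apply: eq_bigr => M hM.
by rewrite big_distrr /=; apply: eq_bigr => L hL; rewrite mulrA.
Qed.

Lemma smul_spowSl (Q : pred iset) X Y W l I J : P I ->
  smul Q (smul P (spow P X l.+1) Y) W I J =
  \sum_(N | P N) X I N * smul Q (smul P (spow P X l) Y) W N J.
Proof.
move=> hI; rewrite /smul.
under eq_bigr => L hL do rewrite big_distrl /=.
under eq_bigr => L hL do under eq_bigr => M hM do
  rewrite -[smul _ _ _ I M]/(spow P X l.+1 I M) spowSl // /smul !big_distrl /=.
under [RHS]eq_bigr => N hN do rewrite big_distrr /=.
under [RHS]eq_bigr => N hN do under eq_bigr => L hL do
  rewrite big_distrl big_distrr /=.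
rewrite exchange_big /=; under eq_bigr => M hM do rewrite exchange_big /=.
rewrite exchange_big /=; apply: eq_bigr => N hN; rewrite exchange_big /=.
by apply: eq_bigr => L hL; apply: eq_bigr => M hM; rewrite !mulrA.
Qed.

End SetMatrixAlgebra.

Section TransferMatrices.
Variables (K : fieldType) (a b : nat) (w : int -> K).
Hypotheses (ha : (1 <= a)%N) (hb : (1 <= b)%N).
Hypothesis w_supp : forall s : int, (s < - b%:Z) || (a%:Z < s) -> w s = 0.
Local Notation iset := {set 'I_(Usz a b)}.

Lemma beta_supp s : (s < - b%:Z) || (a%:Z < s) -> beta w s = 0.
Proof.
move=> hs; rewrite /beta w_supp //.
have -> : (s == 0) = false by apply/negbTE; move: hs; lia.
by rewrite subr0.
Qed.

Lemma dec_enc_a : dec (enc_a a b) = a%:Z.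
Proof. by rewrite /dec /enc_a inordK /Usz; lia. Qed.

Lemma dec_enc_a1 : dec (enc_a1 a b) = a.-1%:Z.
Proof. by rewrite /dec /enc_a1 inordK /Usz; lia. Qed.

Lemma Ttidx_wsub (I : iset) : Ttidx I = wsub a.-1 b.+1 I.
Proof. by rewrite /Ttidx /wsub; congr (_ && within _ _ _); lia. Qed.

Lemma wsub_I0 : wsub a b (I0 a b).
Proof.
apply/andP; split; last by apply/withinP => y; rewrite zmem_I0; lia.
rewrite (@card_zmem _ _ _ (zrange 0 a)) ?size_zrange ?zrange_uniq // => x.
by rewrite mem_zrange zmem_I0; lia.
Qed.

Lemma wsub_It0 : wsub a.-1 b.+1 (It0 a b).
Proof.
apply/andP; split; last by apply/withinP => y; rewrite zmem_It0; lia.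
rewrite (@card_zmem _ _ _ (zrange 0 a.-1)) ?size_zrange ?zrange_uniq // => x.
by rewrite mem_zrange zmem_It0; lia.
Qed.

Lemma I0_eq (I : iset) : wsub a b I ->
  (I == I0 a b) = ~~ has (in_cols I a) (zrange (- b%:Z) b).
Proof.
move=> hI; apply/eqP/idP.
  by move=> ->; apply/hasPn => x; rewrite mem_zrange /in_cols zmem_I0; lia.
move=> hn; apply/eqP; rewrite eqEcard.
case/andP: (hI) => /eqP -> _; case/andP: wsub_I0 => /eqP -> _; rewrite leqnn andbT.
apply/subsetP => k hk; rewrite inE.
have hd : zmem I (dec k) by apply/zmemP; exists k.
have := wsub_zmem hI hd; case: (ltP (dec k) 0) => hneg; last by lia.
by move/hasPn: hn => /(_ (dec k)); rewrite mem_zrange /in_cols hd orbT; lia.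
Qed.

Lemma Tpow_minor m (I : iset) : wsub a b I ->
  spow (@Tidx a b) (Tmx w) m I (I0 a b) =
  tminor (fun _ => beta w) m (cols I a b m).
Proof.
elim: m I => [|m IH] I hI.
  by rewrite /= /sid /tminor det_mx00 (I0_eq hI) size_filter has_count; case: (count _ _).
rewrite spowSl //; last exact: wsub_I0.
rewrite (@transfer_step a b a b (enc_a a b) (leqnn a) (leqnSn b) hb dec_enc_a I hI K (beta w)
  (fun _ => beta w) (fun _ => beta w) 1 (fun J => spow (@Tidx a b) (Tmx w) m J (I0 a b))).
- by rewrite mul1r.
- by move=> s hs; apply: beta_supp; lia.
- by move=> s; rewrite mul1r.
- by [].
- by move=> i; apply: beta_supp; lia.
- by move=> J hJ; rewrite IH.
Qed.
Lemma betat_supp s : a.-1%:Z < s -> betat w s = 0.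
Proof. by move=> hs; rewrite /betat beta_supp ?oppr0 //; lia. Qed.

Lemma wsub_U1 (I : iset) : wsub a.-1 b.+1 I ->
  wsub a b (I :|: [set enc_a1 a b]) = ~~ zmem I (- b.+1%:Z).
Proof.
move=> hI; have hc := card_Ue (leq_pred a) (leqnn _) (ltn0Sn _) dec_enc_a1 hI.
rewrite /wsub hc prednK // eqxx /=; apply/withinP/idP.
  move=> hw; apply/negP => hd; have := hw (- b.+1%:Z).
  by rewrite zmemU1 hd /= => /(_ isT); lia.
move=> hn y; rewrite zmemU1 dec_enc_a1 => /orP[hd|/eqP ->]; last by lia.
have := wsub_zmem hI hd; have : y != - b.+1%:Z by apply: contraNneq hn => <-.
lia.
Qed.

Lemma cols_U1 (I : iset) m : ~~ zmem I (- b.+1%:Z) ->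
  cols I a.-1 b.+1 m = cols (I :|: [set enc_a1 a b]) a b m.
Proof.
move=> hn; rewrite /cols addnS zrangeS /= {1}/in_cols (negbTE hn) orbF.
have -> : (a.-1%:Z <= - b.+1%:Z) = false by lia.
have -> : - b.+1%:Z + 1 = - b%:Z by lia.
apply: eq_filter => x; rewrite /in_cols zmemU1 dec_enc_a1.
by case: (zmem I x); lia.
Qed.

Definition mixed (l m : nat) (I : iset) : K :=
  smul (@Tidx a b) (smul (@Ttidx a b) (spow (@Ttidx a b) (Ttmx w) l) (@Umx K a b))
       (spow (@Tidx a b) (Tmx w) m) I (I0 a b).

Definition hmix (l i : nat) (s : int) : K := if (i < l)%N then beta w (s + 1) else beta w s.

Lemma mixed0 m (I : iset) : wsub a.-1 b.+1 I ->
  mixed 0 m I = tminor (fun _ => beta w) m (cols I a.-1 b.+1 m).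
Proof.
move=> hI; rewrite /mixed {1}/smul.
under eq_bigr => L hL do rewrite smul1mx ?Ttidx_wsub // /Umx.
case hT: (wsub a b (I :|: [set enc_a1 a b])).
  rewrite (bigD1 (I :|: [set enc_a1 a b])) //= eqxx mul1r big1 ?addr0; last first.
    by move=> L /andP[_ hL]; rewrite eq_sym (negbTE hL) mul0r.
  by rewrite Tpow_minor // cols_U1 // -wsub_U1.
rewrite big1; last first.
  move=> L hL; case: eqP => [hIL|]; last by rewrite mul0r.
  by move: hL; rewrite -hIL /Tidx -/(wsub _ _ _) hT.
move: hT; rewrite wsub_U1 // => /negbFE hd.
apply/esym/(@tminor_zero_col _ _ _ _ (- b.+1%:Z)).
  by rewrite mem_cols /in_cols hd orbT /=; lia.
by move=> i; apply: beta_supp; lia.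
Qed.

(* Each Ttilde factor is one more transfer step, whose first row of data is
   -betat = beta(. + 1); hence the sign (-1)^l. *)
Lemma mixed_minor l m (I : iset) : wsub a.-1 b.+1 I ->
  mixed l m I = (-1) ^+ l * tminor (hmix l) (l + m) (cols I a.-1 b.+1 (l + m)).
Proof.
elim: l I => [|l IH] I hI.
  by rewrite expr0 mul1r mixed0 //; apply: eq_tminor.
rewrite /mixed smul_spowSl ?Ttidx_wsub //.
under eq_bigl => N do rewrite Ttidx_wsub.
under eq_bigr => N hN do rewrite -/(mixed l m N) IH // mulrCA.
rewrite -mulr_sumr addSn.
rewrite (@transfer_step a b a.-1 b.+1 (enc_a1 a b) (leq_pred a) (leqnn _) (ltn0Sn _)
  dec_enc_a1 I hI K (betat w) (hmix l.+1) (hmix l) (-1)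
  (fun J => tminor (hmix l) (l + m) (cols J a.-1 b.+1 (l + m)))).
- by rewrite exprS; ring.
- exact: betat_supp.
- by move=> s; rewrite /hmix /betat /=; ring.
- by [].
- by move=> i; rewrite /hmix; case: ifP => _; apply: beta_supp; lia.
- by [].
Qed.

End TransferMatrices.

Lemma cols_It0 a b m : (1 <= a)%N -> cols (It0 a b) a.-1 b.+1 m = zrange 0 m.
Proof.
move=> ha; apply: lt_sorted_eq; [exact: cols_sorted | exact: zrange_sorted |].
by move=> x; rewrite mem_cols mem_zrange /in_cols zmem_It0; lia.
Qed.

Lemma Fkl_minor (K : fieldType) (w : int -> K) k l : (l <= k)%N ->
  Fkl w k l = (-1) ^+ l * tminor (hmix w l) k (zrange 0 k).
Proof.
move=> hlk; rewrite /tminor size_zrange eqxx /Fkl /cofactor inordK ?ltnS // addn0.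
congr (_ * \det _); apply/matrixP => i j.
rewrite !mxE (nth_map 0%N) ?size_iota // nth_iota // add0n.
rewrite -val_eqE /= inordK ?ltnS // /bump /hmix /beta.
by case: ltnP => hil; congr (_%:R - w _); lia.
Qed.

(* Deleting row 0 and column 0 of 1 - A_k leaves 1 - A_(k-1). *)
Lemma Fkl0 (K : fieldType) (w : int -> K) k : Fkl w k 0 = Fk w k.
Proof.
case: k => [|k]; first by rewrite /Fkl /Fk /cofactor det_mx00 mulr1 inordK.
rewrite /Fkl /Fk /cofactor inordK // addn0 expr0 mul1r; congr (\det _).
apply/matrixP => i j; rewrite !mxE -val_eqE /= inordK // /bump.
by congr (_%:R - w _); lia.
Qed.

Theorem mainTheorem8 (K : fieldType) (hK : [pchar K] =i pred0)
  (S : seq int) (a b : nat) (w : int -> K)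
  (ha : (1 <= a)%N) (hb : (1 <= b)%N)
  (hamax : a%:Z \in S) (hbmin : - b%:Z \in S)
  (hS : forall s, s \in S -> - b%:Z <= s <= a%:Z)
  (hw : forall s, s \notin S -> w s = 0) :
  (forall k l : nat, (l <= k)%N ->
     Fkl w k l =
     @smul K a b (@Tidx a b)
       (@smul K a b (@Ttidx a b)
          (@spow K a b (@Ttidx a b) (@Ttmx K a b w) l) (@Umx K a b))
       (@spow K a b (@Tidx a b) (@Tmx K a b w) (k - l)) (It0 a b) (I0 a b))
  /\ (forall k : nat, Fkl w k 0 = Fk w k).
Proof.
have w_supp s : (s < - b%:Z) || (a%:Z < s) -> w s = 0.
  by move=> hs; apply: hw; apply/negP => /hS; lia.
split=> [k l hlk|]; last exact: Fkl0.
rewrite -/(mixed w l (k - l) (It0 a b)) mixed_minor ?wsub_It0 //.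
by rewrite subnKC // cols_It0 // Fkl_minor.
Qed.
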